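(* Let $n\ge2$ and let $a_1<a_2$ be positive integers. Let $\phi:\mathbb{R}^n_{\ge0}\to\mathbb{R}^2_{\ge0}$, $\phi(x)=(\sum_{i=1}^n x_i^{a_1},\sum_{i=1}^n x_i^{a_2})$. Then $$\mathrm{im}(\phi)=\bigl\{c\in\mathbb{R}^2_{\ge0}:\ c_2^{a_1}\le c_1^{a_2}\le n^{a_2-a_1}c_2^{a_1}\bigr\}.$$ *)

From mathcomp Require Import all_boot all_order all_algebra.
From mathcomp Require Import reals.
Set Implicit Arguments. Unset Strict Implicit. Unset Printing Implicit Defensive.
Import Order.TTheory GRing.Theory Num.Theory.
Local Open Scope ring_scope.

Definition phi (R : realType) (n a1 a2 : nat) (x : 'I_n -> R) : R * R :=
  (\sum_(i < n) x i ^+ a1, \sum_(i < n) x i ^+ a2).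
Arguments phi : clear implicits.

(* Write S_m for sum_i x_i^m and let 0 < p <= q.  Every x_i is at most t = S_p^(1/p), so
   S_q <= t^(q-p) S_p = t^q, i.e. S_q^p <= S_p^q.  For the power mean inequality
   S_p^q <= n^(q-p) S_q^p, choose t with n t^q = S_q and sum the weighted AM-GM inequality
   q x^p t^(q-p) <= p x^q + (q-p) t^q over i: this gives S_p <= n t^p.
   Conversely, on the vectors k (1, l, ..., l) the quotient S_q^p / S_p^q does not depend
   on k, equals 1 at l = 0 and n^(p-q) at l = 1; the intermediate value theorem yields l
   with the prescribed quotient c_2^p / c_1^q, and then k is fixed by S_p = c_1. *)

From mathcomp Require Import all_boot all_order all_algebra reals.
Set Implicit Arguments. Unset Strict Implicit. Unset Printing Implicit Defensive.
Import Order.TTheory GRing.Theory Num.Theory.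
Local Open Scope ring_scope.

Lemma weighted_AGM_pow (R : realDomainType) (p q : nat) (x t : R) :
  (p <= q)%N -> 0 <= x -> 0 <= t ->
  q%:R * (x ^+ p * t ^+ (q - p)) <= p%:R * x ^+ q + (q - p)%:R * t ^+ q.
Proof.
move=> le_pq x0 t0; have [->|q_gt0] := posnP q.
  by rewrite mul0r addr_ge0 // mulr_ge0 ?exprn_ge0.
pose E (i : 'I_p + 'I_(q - p)) := if i is inl _ then x ^+ q else t ^+ q.
have cardE : #|predT : {pred 'I_p + 'I_(q - p)}| = q.
  by rewrite cardT -cardE card_sum !card_ord subnKC.
have E_ge0 i : 0 <= E i *+ q by case: i => i; rewrite mulrn_wge0 ?exprn_ge0.
have := @leif_AGM_scaled R _ predT E; rewrite cardE.
move=> /(_ (fun i _ => E_ge0 i)) [+ _].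
rewrite prodrMn_const cardE !(big_sumType _ predT) /=.
rewrite !prodr_const !sumr_const !card_ord -!exprM => AGM.
rewrite -(ler_pXn2r q_gt0) ?nnegrE; last 2 first.
- by rewrite mulr_ge0 ?mulr_ge0 ?exprn_ge0.
- by rewrite addr_ge0 ?mulr_ge0 ?exprn_ge0.
rewrite !mulr_natl; apply: le_trans AGM.
by rewrite exprMn_n exprMn -!exprM mulnC [(q * (q - p))%N]mulnC.
Qed.

Lemma exists_nonneg_root (R : rcfType) (k : nat) (a : R) :
  (0 < k)%N -> 0 <= a -> exists2 t, 0 <= t & t ^+ k = a.
Proof.
move=> k_gt0 a0; have le01a : 0 <= 1 + a by rewrite addr_ge0.
have sign_change : ('X^k - a%:P).[0] <= 0 <= ('X^k - a%:P).[1 + a].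
  rewrite !hornerE expr0n eqn0Ngt k_gt0 sub0r oppr_le0 a0 subr_ge0.
  by rewrite (le_trans _ (ler_eXnr _ _)) ?lerDr ?lerDl.
have [t /andP[t0 _]] := poly_ivt le01a sign_change.
by rewrite /root !hornerE subr_eq0 => /eqP; exists t.
Qed.

Lemma power_sum_ge0 (R : numDomainType) (n m : nat) (x : 'I_n -> R) :
  (forall i, 0 <= x i) -> 0 <= \sum_(i < n) x i ^+ m.
Proof. by move=> x_ge0; rewrite sumr_ge0 // => i _; rewrite exprn_ge0. Qed.

Lemma power_term_le_sum (R : numDomainType) (n m : nat) (x : 'I_n -> R) (i : 'I_n) :
  (forall i, 0 <= x i) -> x i ^+ m <= \sum_(j < n) x j ^+ m.
Proof.
by move=> x_ge0; rewrite (bigD1 i) //= lerDl sumr_ge0 // => j _; rewrite exprn_ge0.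
Qed.

Lemma ler_power_sums (R : rcfType) (n p q : nat) (x : 'I_n -> R) :
  (0 < p)%N -> (p <= q)%N -> (forall i, 0 <= x i) ->
  (\sum_(i < n) x i ^+ q) ^+ p <= (\sum_(i < n) x i ^+ p) ^+ q.
Proof.
move=> p_gt0 le_pq x_ge0.
have [t t_ge0 tp] := exists_nonneg_root p_gt0 (power_sum_ge0 p x_ge0).
have le_xt i : x i <= t.
  by rewrite -(ler_pXn2r p_gt0) ?nnegrE // tp power_term_le_sum.
have le_Sq : \sum_(i < n) x i ^+ q <= t ^+ (q - p) * t ^+ p.
  rewrite tp mulr_sumr; apply: ler_sum => i _.
  by rewrite -{1}(subnK le_pq) exprD ler_wpM2r ?exprn_ge0 // lerXn2r ?nnegrE.
rewrite -exprD subnK // in le_Sq.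
by rewrite -tp -exprM mulnC exprM lerXn2r ?nnegrE ?exprn_ge0 ?power_sum_ge0.
Qed.

Lemma power_sum_le_card_mul (R : realDomainType) (n p q : nat) (x : 'I_n -> R) (t : R) :
  (0 < p)%N -> (p <= q)%N -> (forall i, 0 <= x i) -> 0 <= t ->
  \sum_(i < n) x i ^+ q <= n%:R * t ^+ q -> \sum_(i < n) x i ^+ p <= n%:R * t ^+ p.
Proof.
move=> p_gt0 le_pq x_ge0 t_ge0 le_Sq; have q_gt0 := leq_trans p_gt0 le_pq.
move: t_ge0; rewrite le_eqVlt => /predU1P[t0 | t_gt0].
  subst t; rewrite expr0n eqn0Ngt q_gt0 mulr0 in le_Sq.
  have x0 i : x i = 0.
    apply/eqP; rewrite eq_le x_ge0 andbT -(ler_pXn2r q_gt0) ?nnegrE // expr0n eqn0Ngt q_gt0.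
    exact: le_trans (power_term_le_sum q i x_ge0) le_Sq.
  rewrite big1 => [|i _]; rewrite ?x0 expr0n eqn0Ngt p_gt0 ?mulr0 //.
have sum_AGM : q%:R * ((\sum_(i < n) x i ^+ p) * t ^+ (q - p))
    <= p%:R * \sum_(i < n) x i ^+ q + (q - p)%:R * (n%:R * t ^+ q).
  have -> : n%:R * t ^+ q = \sum_(i < n) t ^+ q by rewrite sumr_const card_ord mulr_natl.
  rewrite mulr_suml !mulr_sumr -big_split /=; apply: ler_sum => i _.
  exact: weighted_AGM_pow (x_ge0 i) (ltW t_gt0).
have ntq : n%:R * t ^+ q = n%:R * t ^+ p * t ^+ (q - p) by rewrite -mulrA -exprD subnKC.
have : q%:R * ((\sum_(i < n) x i ^+ p) * t ^+ (q - p)) <= q%:R * (n%:R * t ^+ p * t ^+ (q - p)).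
  apply: le_trans sum_AGM _.
  have -> : q%:R = p%:R + (q - p)%:R :> R by rewrite -natrD subnKC.
  by rewrite -ntq mulrDl lerD2r ler_wpM2l.
by rewrite ler_pM2l ?ltr0n // ler_pM2r ?exprn_gt0.
Qed.

Lemma ler_power_sums_card (R : rcfType) (n p q : nat) (x : 'I_n -> R) :
  (0 < p)%N -> (p <= q)%N -> (forall i, 0 <= x i) ->
  (\sum_(i < n) x i ^+ p) ^+ q <= n%:R ^+ (q - p) * (\sum_(i < n) x i ^+ q) ^+ p.
Proof.
move=> p_gt0 le_pq x_ge0; have q_gt0 := leq_trans p_gt0 le_pq.
case: n x x_ge0 => [|n] x x_ge0.
  by rewrite !big_ord0 expr0n eqn0Ngt q_gt0 mulr_ge0 ?exprn_ge0.
have Sq_ge0 := power_sum_ge0 q x_ge0.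
have [t t_ge0 tq] := exists_nonneg_root q_gt0 (divr_ge0 Sq_ge0 (ler0n R n.+1)).
have Sq_eq : \sum_(i < n.+1) x i ^+ q = n.+1%:R * t ^+ q.
  by rewrite tq mulrC divfK ?pnatr_eq0.
have le_Sp : \sum_(i < n.+1) x i ^+ p <= n.+1%:R * t ^+ p.
  by apply: (power_sum_le_card_mul (q := q)); rewrite // Sq_eq.
rewrite Sq_eq; apply: le_trans (lerXn2r _ _ _ le_Sp) _.
- by rewrite nnegrE power_sum_ge0.
- by rewrite nnegrE mulr_ge0 ?exprn_ge0.
by rewrite !exprMn mulrA -exprD subnK // -!exprM mulnC.
Qed.

Definition head_tail_vec (R : pzSemiRingType) (n : nat) (k l : R) : 'I_n.+1 -> R :=
  fun i => k * (if i == ord0 then 1 else l).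

Lemma power_sum_head_tail (R : comPzSemiRingType) (n m : nat) (k l : R) :
  \sum_(i < n.+1) head_tail_vec k l i ^+ m = k ^+ m * (1 + n%:R * l ^+ m).
Proof.
rewrite big_ord_recl /head_tail_vec eqxx mulr1.
under eq_bigr => i _ do rewrite eq_sym (negbTE (neq_lift _ _)).
by rewrite sumr_const card_ord exprMn mulrDr mulr1 mulr_natl mulrnAr.
Qed.

(* Multiplied out, so that c1 = 0 needs no separate treatment. *)
Lemma exists_power_sums_balance (R : rcfType) (n p q : nat) (c1 c2 : R) :
  (0 < p)%N -> (p <= q)%N ->
  c2 ^+ p <= c1 ^+ q -> c1 ^+ q <= n.+1%:R ^+ (q - p) * c2 ^+ p ->
  exists2 l, 0 <= l &
    c2 ^+ p * (1 + n%:R * l ^+ p) ^+ q = c1 ^+ q * (1 + n%:R * l ^+ q) ^+ p.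
Proof.
move=> p_gt0 le_pq le_c21 le_c12; have q_gt0 := leq_trans p_gt0 le_pq.
pose Q := c2 ^+ p *: (1 + n%:R *: 'X^p) ^+ q - c1 ^+ q *: (1 + n%:R *: 'X^q) ^+ p.
have QE l : Q.[l] = c2 ^+ p * (1 + n%:R * l ^+ p) ^+ q - c1 ^+ q * (1 + n%:R * l ^+ q) ^+ p.
  by rewrite !hornerE.
have sign_change : Q.[0] <= 0 <= Q.[1].
  rewrite !QE !expr0n !eqn0Ngt p_gt0 q_gt0 !mulr0 !addr0 !expr1n !mulr1 subr_le0 le_c21 andTb.
  rewrite subr_ge0 nat1r -[in X in _ <= X](subnK le_pq) exprD mulrA.
  by rewrite ler_wpM2r ?exprn_ge0 // mulrC.
have [l /andP[l0 _]] := poly_ivt ler01 sign_change.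
by rewrite /root QE subr_eq0 => /eqP; exists l.
Qed.

Lemma phi_onto (R : realType) (n p q : nat) (c1 c2 : R) :
  (0 < p)%N -> (p <= q)%N -> 0 <= c1 -> 0 <= c2 ->
  c2 ^+ p <= c1 ^+ q -> c1 ^+ q <= n.+1%:R ^+ (q - p) * c2 ^+ p ->
  exists x : 'I_n.+1 -> R, (forall i, 0 <= x i) /\ phi R n.+1 p q x = (c1, c2).
Proof.
move=> p_gt0 le_pq c1_ge0 c2_ge0 le_c21 le_c12.
have [l l_ge0 balance] := exists_power_sums_balance p_gt0 le_pq le_c21 le_c12.
set A := 1 + n%:R * l ^+ p in balance; set B := 1 + n%:R * l ^+ q in balance.
have A_gt0 : 0 < A by rewrite ltr_pwDl ?mulr_ge0 ?exprn_ge0.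
have B_ge0 : 0 <= B by rewrite addr_ge0 ?mulr_ge0 ?exprn_ge0.
have [k k_ge0 kp] := exists_nonneg_root p_gt0 (divr_ge0 c1_ge0 (ltW A_gt0)).
exists (head_tail_vec k l); split=> [i | ].
  by rewrite mulr_ge0 //; case: ifP.
rewrite /phi !power_sum_head_tail -/A -/B kp divfK ?gt_eqF //; congr pair.
apply: (pexpIrn p_gt0); rewrite ?nnegrE ?mulr_ge0 ?exprn_ge0 //.
have Aq_neq0 : A ^+ q != 0 by rewrite expf_neq0 ?gt_eqF.
by rewrite -(mulfK Aq_neq0 (c2 ^+ p)) balance exprMn -exprM mulnC exprM kp expr_div_n mulrAC.
Qed.

Theorem proposition5p2 (R : realType) (n a1 a2 : nat)
  (hn : (2 <= n)%N) (ha1 : (0 < a1)%N) (ha12 : (a1 < a2)%N) (c : R * R) :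
  (exists x : 'I_n -> R, (forall i, 0 <= x i) /\ phi R n a1 a2 x = c) <->
  [/\ 0 <= c.1, 0 <= c.2,
      c.2 ^+ a1 <= c.1 ^+ a2 &
      c.1 ^+ a2 <= (n%:R) ^+ (a2 - a1) * c.2 ^+ a1].
Proof.
have le_a12 := ltnW ha12.
split=> [[x [x_ge0 <-]] | ].
  split; rewrite ?power_sum_ge0 //.
    exact: ler_power_sums.
  exact: ler_power_sums_card.
case: n hn => [|n] // _; case: c => c1 c2 /= [c1_ge0 c2_ge0 le_c21 le_c12].
exact: phi_onto.
Qed.
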